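(* Let $G$ be a fullerene graph. Then $G$ has a perfect star packing if and only if $G$ has an independent vertex set $S^*$ such that each connected component of $G-S^*$ is a cycle which is an induced cycle of $G$.
   Context: A fullerene graph is a finite simple connected (equivalently, $3$-connected) plane cubic graph all of whose faces are pentagons or hexagons. A perfect star packing of a graph $G$ is a spanning subgraph of $G$ every connected component of which is isomorphic to the star $K_{1,3}$. A cycle $v_1\cdots v_k v_1$ in $G$ is induced if it has no chord, i.e. no edge $v_iv_j$ of $G$ with $v_i,v_j$ non-consecutive on the cycle. *)

From mathcomp Require Import all_boot.
Set Implicit Arguments. Unset Strict Implicit. Unset Printing Implicit Defensive.

Section Defs.
Variable V : finType.
Implicit Types (e : rel V).

Definition simple_graph e := symmetric e /\ irreflexive e.

Definition connected_graph e := forall u v : V, connect e u v.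

Definition neighbours e (v : V) : {set V} := [set u | e v u].

Definition cubic e := forall v : V, #|neighbours e v| = 3.

Definition dart e : pred (V * V) := [pred d | e d.1 d.2].

(* A rotation system: sigma v is a cyclic permutation of the neighbours of v
   (the clockwise successor of a neighbour of v around v). *)
Definition rotation_system e (sigma : V -> V -> V) :=
  forall v : V,
    [/\ {in neighbours e v, forall u, sigma v u \in neighbours e v},
        {in neighbours e v &, injective (sigma v)} &
        {in neighbours e v &, forall u w, fconnect (sigma v) u w}].

Definition face_step (sigma : V -> V -> V) (d : V * V) : V * V :=
  (d.2, sigma d.2 d.1).

(* number of faces of the embedding = number of face_step orbits on darts *)
Definition nb_faces e sigma := fcard (face_step sigma) (dart e).

(* a plane (genus 0) embedding of a connected graph given by a rotation
   system: Euler's formula |V| - |E| + |F| = 2, with |E| = #darts / 2 *)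
Definition plane_rotation e sigma :=
  rotation_system e sigma /\ #|V| + nb_faces e sigma = #|dart e| %/ 2 + 2.

(* fullerene graph: finite simple connected plane cubic graph all of whose
   faces are pentagons or hexagons (face length = length of the face orbit) *)
Definition fullerene e :=
  [/\ simple_graph e, connected_graph e, cubic e &
      exists sigma, plane_rotation e sigma /\
        {in dart e, forall d, order (face_step sigma) d \in [:: 5; 6]}].

(* perfect star packing: spanning subgraph H of G every component of which
   is isomorphic to K_{1,3}: 4 vertices, a centre c, and H-edges inside the
   component are exactly the pairs {c, x} with x a leaf. *)
Definition component (H : rel V) (v : V) : {set V} := [set u | connect H v u].

Definition is_K13_component (H : rel V) (v : V) :=
  #|component H v| = 4 /\
  exists2 c, c \in component H v &
    {in component H v &, forall x y, H x y = ((x == c) != (y == c))}.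

Definition perfect_star_packing e :=
  exists H : rel V, [/\ subrel H e, symmetric H &
                       forall v, is_K13_component H v].

Definition independent e (S : {set V}) := {in S &, forall x y, ~~ e x y}.

Definition del_rel e (S : {set V}) : rel V :=
  [rel x y | e x y && (x \notin S) && (y \notin S)].

Definition induced_cycle_on e (C : {set V}) :=
  exists s : seq V, [/\ uniq s, 3 <= size s, C = [set x in s] &
    {in s &, forall x y, e x y = (y == next s x) || (x == next s y)}].

Definition components_induced_cycles e (S : {set V}) :=
  forall v, v \notin S -> induced_cycle_on e (component (del_rel e S) v).

End Defs.

From mathcomp Require Import all_boot.
Set Implicit Arguments. Unset Strict Implicit. Unset Printing Implicit Defensive.

(* In a cubic graph both sides say that G has an efficient dominating set S:
   an independent set such that every vertex outside S has exactly one
   neighbour in S.  The centres of a perfect star packing form such a set,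
   because the three leaves of a star are all the neighbours of its centre;
   conversely, the stars centred at the vertices of such an S partition V.
   As G is cubic, a vertex outside S has one neighbour in S iff it has degree
   2 in G - S, and a 2-regular finite graph is a disjoint union of cycles,
   which are induced in G since every edge of G avoiding S survives in G - S. *)

Lemma next_neq_prev (T : eqType) (s : seq T) x :
  uniq s -> 2 < size s -> x \in s -> next s x != prev s x.
Proof.
move=> us ss xs; apply/eqP => E.
have E2 : next s (next s x) = x by rewrite E next_prev.
case: (rot_to xs) => i p hp.
have := E2; rewrite -!(next_rot i us) hp.
have : 2 < size (x :: p) by rewrite -hp size_rot.
have : uniq (x :: p) by rewrite -hp rot_uniq.
case: p {hp} => [|a [|b t]] //=; rewrite eqxx !inE !negb_or.
move=> /and4P[/and3P[xa xb _] /andP[ab _] _ _] _.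
by rewrite eq_sym (negbTE xa) eqxx => /eqP; rewrite eq_sym (negbTE xb).
Qed.

Lemma eq_next_prev (T : eqType) (s : seq T) x y :
  uniq s -> (x == next s y) = (y == prev s x).
Proof. by move=> us; apply/eqP/eqP => ->; rewrite ?prev_next ?next_prev. Qed.

Lemma card_ge3 (T : finType) (A : {set T}) a b c :
  a \in A -> b \in A -> c \in A -> a != b -> a != c -> b != c -> 3 <= #|A|.
Proof.
move=> aA bA cA ab ac bc.
rewrite (cardsD1 a) aA (cardsD1 b) !inE eq_sym ab bA /= !add1n !ltnS.
by apply/card_gt0P; exists c; rewrite !inE eq_sym bc eq_sym ac.
Qed.

Section Components.
Variables (T : finType) (r : rel T).

Lemma in_neighbours x y : (y \in neighbours r x) = r x y.
Proof. by rewrite inE. Qed.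

Lemma in_component x y : (y \in component r x) = connect r x y.
Proof. by rewrite inE. Qed.

Lemma mem_component x : x \in component r x.
Proof. by rewrite in_component connect0. Qed.

Lemma component_eq x y :
  symmetric r -> connect r x y -> component r x = component r y.
Proof.
move=> sym_r cxy; apply/setP => z; rewrite !in_component.
by rewrite (same_connect (sym_connect_sym sym_r) cxy).
Qed.

Lemma connect_preserved (P : pred T) x y :
  (forall a b, P a -> r a b -> P b) -> P x -> connect r x y -> P y.
Proof.
move=> Pr Px /connectP [p + ->]; elim: p x Px => //= z p IHp x Px /andP[rxz].
exact: IHp (Pr _ _ Px rxz).
Qed.

Lemma longest_upath v : exists p,
  [/\ path r v p, uniq (v :: p) &
      forall q, path r v q -> uniq (v :: q) -> size q <= size p].
Proof.
pose P n := [exists t : n.-tuple T, path r v t && uniq (v :: t)].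
have exP : exists n, P n by exists 0; apply/existsP; exists [tuple].
have ubP n : P n -> n <= #|T|.
  case/existsP => t /andP[_ /card_uniqP ut].
  rewrite -(size_tuple t) -ltnS -[(size t).+1]/(size (v :: val t)) -ut.
  exact: leqW (max_card _).
case: (ex_maxnP exP ubP) => m /existsP [t /andP[pt ut]] tmax.
exists t; split => // q pq uq; rewrite size_tuple; apply: tmax.
by apply/existsP; exists (in_tuple q); rewrite /= pq.
Qed.

End Components.

Section TwoRegular.
Variables (T : finType) (r : rel T).
Hypotheses (sym_r : symmetric r) (irr_r : irreflexive r).

Lemma cycle_neighbours s x : uniq s -> 2 < size s -> cycle r s -> x \in s ->
  #|neighbours r x| = 2 -> neighbours r x = [set next s x; prev s x].
Proof.
move=> us ss cs xs degx; apply/esym/eqP.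
rewrite eqEcard cards2 next_neq_prev // degx leqnn andbT.
apply/subsetP => y; rewrite !inE => /orP[] /eqP ->; first exact: next_cycle.
by rewrite sym_r; exact: prev_cycle.
Qed.

Lemma path_inner_degree v p1 z b p2 w :
  path r v (p1 ++ z :: b :: p2) -> uniq (v :: p1 ++ z :: b :: p2) ->
  w \in p2 -> r z w -> 3 <= #|neighbours r z|.
Proof.
rewrite cat_path -cat_cons cat_uniq /= => /and4P[_ raz rzb _].
case/and5P=> _ disj _ bp2 _ wp2 rzw.
set a := last v p1 in raz disj.
have ap : a \in v :: p1 by apply: mem_last.
apply: (card_ge3 (a := a) (b := b) (c := w)); rewrite ?in_neighbours //.
- by rewrite sym_r.
- by apply: contraNneq disj => <-; rewrite ap orbT.
- apply: contraNneq disj => aw; apply/or3P; constructor 3.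
  by apply/hasP; exists w; rewrite // -aw.
- by apply: contraNneq bp2 => ->.
Qed.

Variable v : T.
Hypothesis deg2 : forall x, connect r v x -> #|neighbours r x| = 2.

(* Follow a longest simple path from v to its end w: every neighbour of w
   already lies on the path, and the only one that can close a cycle without
   creating a vertex of degree 3 is v itself. *)
Lemma two_regular_cycle : exists s, [/\ uniq s, 2 < size s, v \in s & cycle r s].
Proof.
have [p [pp up pmax]] := longest_upath r v.
have conn_p : forall x, x \in v :: p -> connect r v x := path_connect pp.
case/lastP: p pp up pmax conn_p => [|p w] pp up pmax conn_p.
  have /card_gt0P[y] : 0 < #|neighbours r v| by rewrite deg2 ?connect0.
  rewrite in_neighbours => rvy.
  have vy : v != y by apply: contraTneq rvy => ->; rewrite irr_r.
  by have := pmax [:: y]; rewrite /= rvy !inE vy => /(_ isT isT).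
set u := last v p.
have [pp' ruw] : path r v p /\ r u w by move: pp; rewrite rcons_path => /andP[].
have w_nbrs y : r w y -> y \in v :: rcons p w.
  move=> rwy; apply/negPn/negP => yn.
  have := pmax (rcons (rcons p w) y).
  rewrite rcons_path pp last_rcons rwy -rcons_cons rcons_uniq yn up size_rcons.
  by rewrite ltnn => /(_ isT isT).
have vw : connect r v w by apply: conn_p; rewrite inE mem_rcons inE eqxx orbT.
have /card_gt0P[z] : 0 < #|neighbours r w :\ u|.
  by move: (deg2 vw); rewrite (cardsD1 u) in_neighbours sym_r ruw add1n => -[->].
rewrite in_setD1 in_neighbours => /andP[zu rwz].
have zw : z != w by apply: contraTneq rwz => ->; rewrite irr_r.
have zp : z \in v :: p by move: (w_nbrs _ rwz); rewrite !inE mem_rcons inE (negbTE zw).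
have zv : z = v.
  apply/eqP; apply: contraT => zv.
  have dz : #|neighbours r z| = 2.
    by apply/deg2/conn_p; rewrite -rcons_cons mem_rcons inE zp orbT.
  have {}zp : z \in p by move: zp; rewrite inE (negbTE zv).
  rewrite /u in zu; clear -sym_r rwz dz zp zu pp up.
  case/splitPr: zp pp up zu => p1 [|b p2] pp up zu; first by rewrite last_cat eqxx in zu.
  move: pp up; rewrite rcons_cat rcons_cons => pp up.
  have wp2 : w \in rcons p2 w by rewrite mem_rcons mem_head.
  have := path_inner_degree pp up wp2 (etrans (sym_r _ _) rwz).
  by rewrite dz.
have rwv : r w v by rewrite -zv.
have p0 : 0 < size p by move: zu; rewrite /u zv; case: (p) => //=; rewrite eqxx.
exists (v :: rcons p w); split => //; first by rewrite /= size_rcons.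
- exact: mem_head.
- by rewrite /= rcons_path pp last_rcons rwv.
Qed.

Lemma two_regular_component : induced_cycle_on r (component r v).
Proof.
have [s [us ss vs cs]] := two_regular_cycle.
have conn_s x : x \in s -> connect r v x.
  case: (rot_to vs) => i p sE; rewrite -(mem_rot i) sE => xs.
  move: cs; rewrite -(rot_cycle i) sE /= => /path_connect; apply.
  by rewrite -rcons_cons mem_rcons inE xs orbT.
have nbrs x : x \in s -> neighbours r x = [set next s x; prev s x].
  by move=> xs; rewrite (cycle_neighbours us) ?deg2 ?conn_s.
exists s; split => //.
- apply/setP => y; rewrite in_component inE; apply/idP/idP => [|/conn_s //].
  apply: (connect_preserved (P := mem s)) => // a b /= a_s rab.
  rewrite -in_neighbours nbrs // !inE in rab.
  by case/orP: rab => /eqP->; rewrite ?mem_next ?mem_prev.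
- move=> x y xs ys; rewrite -in_neighbours nbrs // !inE; congr orb.
  by rewrite eq_next_prev.
Qed.

End TwoRegular.

Lemma induced_cycle_component_degree (T : finType) (r : rel T) x :
  induced_cycle_on r (component r x) -> #|neighbours r x| = 2.
Proof.
case=> s [us ss Cs edges].
have s_comp y : (y \in s) = connect r x y by rewrite -in_component Cs inE.
have xs : x \in s by rewrite s_comp connect0.
have -> : neighbours r x = [set next s x; prev s x].
  apply/setP => y; rewrite in_neighbours !inE.
  apply/idP/idP => [rxy | nxy].
    by rewrite -(eq_next_prev _ _ us) -edges // s_comp connect1.
  have ys : y \in s by case/orP: nxy => /eqP ->; rewrite ?mem_next ?mem_prev.
  by rewrite edges // (eq_next_prev x y us).
by rewrite cards2 next_neq_prev.
Qed.

Section Deletion.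
Variables (T : finType) (e : rel T) (S : {set T}).

Lemma neighbours_del_rel x :
  x \notin S -> neighbours (del_rel e S) x = neighbours e x :\: S.
Proof. by move=> xS; apply/setP => y; rewrite !inE /del_rel /= xS andbT andbC. Qed.

Lemma component_del_rel_subset v :
  v \notin S -> component (del_rel e S) v \subset ~: S.
Proof.
move=> vS; apply/subsetP => y; rewrite in_component.
by apply: (connect_preserved (P := fun x => x \in ~: S)) => [a b _ /andP[]|]; rewrite inE.
Qed.

Lemma induced_cycle_on_del_rel (C : {set T}) :
  C \subset ~: S -> induced_cycle_on (del_rel e S) C <-> induced_cycle_on e C.
Proof.
move=> CS; have del_e (s : seq T) x y : C = [set x in s] -> x \in s -> y \in s ->
    del_rel e S x y = e x y.
  move=> Cs xs ys; have /subsetP sub := CS.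
  by rewrite /del_rel /= -!in_setC !sub ?Cs ?inE ?andbT.
by split=> -[s [us ss Cs edges]]; exists s; split=> // x y xs ys;
  rewrite -edges // (del_e s).
Qed.

Lemma components_induced_cyclesP : symmetric e -> irreflexive e ->
  components_induced_cycles e S <->
  (forall x, x \notin S -> #|neighbours e x :\: S| = 2).
Proof.
move=> sym_e irr_e; split=> [cycles x xS | deg2 v vS].
  rewrite -neighbours_del_rel //; apply: induced_cycle_component_degree.
  by apply/induced_cycle_on_del_rel; [exact: component_del_rel_subset | exact: cycles].
apply/induced_cycle_on_del_rel; first exact: component_del_rel_subset.
apply: two_regular_component => [x y | x | x vx].
- by rewrite /del_rel /= sym_e andbAC.
- by rewrite /del_rel /= irr_e.
have xS : x \notin S.
  by rewrite -in_setC (subsetP (component_del_rel_subset vS)) ?in_component.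
by rewrite neighbours_del_rel ?deg2.
Qed.

End Deletion.

Definition efficient_dominating (T : finType) (e : rel T) (S : {set T}) :=
  independent e S /\ forall x, x \notin S -> #|neighbours e x :&: S| = 1.

Section StarCentres.
Variables (T : finType) (e H : rel T).
Hypotheses (sym_e : symmetric e) (irr_e : irreflexive e) (cub_e : cubic e).
Hypotheses (He : subrel H e) (Hsym : symmetric H).
Hypothesis HK13 : forall v, is_K13_component H v.

Definition star_centres : {set T} :=
  [set x | [forall y in component H x, (y == x) || H x y]].

Lemma mem_star_centres v c : c \in component H v ->
  {in component H v &, forall x y, H x y = ((x == c) != (y == c))} ->
  #|component H v| = 4 ->
  {in component H v, forall x, (x \in star_centres) = (x == c)}.
Proof.
move=> cv Hc card4 x xv.
have compE y : y \in component H v -> component H y = component H v.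
  by rewrite in_component => vy; rewrite (component_eq Hsym vy).
rewrite inE compE //; apply/forall_inP/eqP => [xH | -> y yv]; last first.
  by rewrite Hc // eqxx; case: (y == c).
apply/eqP; apply: contraT => xc.
have /card_gt0P[y] : 0 < #|component H v :\ x :\ c|.
  move: card4; rewrite (cardsD1 x) xv (cardsD1 c) in_setD1 cv eq_sym xc.
  by rewrite !add1n => -[->].
rewrite !in_setD1 => /and3P[yc yx yv].
by have := xH y yv; rewrite (negbTE yx) Hc // (negbTE xc) (negbTE yc).
Qed.

Lemma star_centre_edge x y : x \in star_centres -> e x y -> H x y.
Proof.
move=> xS exy; have [card4 [c cx Hc]] := HK13 x.
have /eqP xc : x == c by rewrite -(mem_star_centres cx Hc card4 (mem_component H x)).
subst c; have leaves : component H x :\ x = neighbours e x.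
  apply/eqP; rewrite eqEcard cub_e.
  move: card4; rewrite (cardsD1 x) mem_component add1n => -[->]; rewrite leqnn andbT.
  apply/subsetP => z; rewrite in_setD1 => /andP[zx zc]; rewrite in_neighbours.
  by apply: He; rewrite Hc ?mem_component // eqxx zx.
have : y \in component H x :\ x by rewrite leaves in_neighbours.
by rewrite in_setD1 => /andP[yx yc]; rewrite Hc ?mem_component // eqxx yx.
Qed.

Lemma star_centres_independent : independent e star_centres.
Proof.
move=> x y xS yS; apply/negP => exy.
have [card4 [c cx Hc]] := HK13 x.
have yx : y \in component H x by rewrite in_component connect1 ?star_centre_edge.
have centreE := mem_star_centres cx Hc card4.
move: (centreE _ (mem_component H x)) (centreE _ yx).
rewrite xS yS => /esym/eqP xc /esym/eqP yc.
by move: exy; rewrite xc yc irr_e.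
Qed.

Lemma star_centres_dominating x :
  x \notin star_centres -> #|neighbours e x :&: star_centres| = 1.
Proof.
move=> xS; have [card4 [c cx Hc]] := HK13 x.
have centreE := mem_star_centres cx Hc card4.
have xc : x != c by rewrite -centreE ?mem_component.
suff -> : neighbours e x :&: star_centres = [set c] by rewrite cards1.
apply/setP => y; rewrite in_setI in_set1 in_neighbours.
apply/andP/eqP => [[exy yS] | ->]; last first.
  rewrite centreE // eqxx; split=> //.
  by apply: He; rewrite Hc ?mem_component ?eqxx ?(negbTE xc).
have Hyx := star_centre_edge yS (etrans (sym_e y x) exy).
have yx : y \in component H x by rewrite in_component connect1 // Hsym.
by apply/eqP; rewrite -centreE.
Qed.

End StarCentres.

Section StarsAroundS.
Variables (T : finType) (e : rel T) (S : {set T}).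
Hypotheses (sym_e : symmetric e) (irr_e : irreflexive e) (cub_e : cubic e).
Hypothesis Sdom : efficient_dominating e S.

Definition star_rel : rel T := [rel x y | e x y && ((x \in S) != (y \in S))].

Lemma star_rel_sym : symmetric star_rel.
Proof. by move=> x y; rewrite /star_rel /= sym_e; case: (x \in S); case: (y \in S). Qed.

Lemma S_neighbour_notin c y : c \in S -> e c y -> y \notin S.
Proof. by move=> cS ecy; apply: contraL ecy; apply: Sdom.1. Qed.

Lemma S_neighbour_unique x y z :
  x \notin S -> y \in S -> z \in S -> e x y -> e x z -> y = z.
Proof.
move=> xS yS zS exy exz.
have /cards1P[c cE] : #|neighbours e x :&: S| == 1 by rewrite Sdom.2.
have : y \in neighbours e x :&: S by rewrite in_setI in_neighbours exy.
have : z \in neighbours e x :&: S by rewrite in_setI in_neighbours exz.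
by rewrite cE !in_set1 => /eqP -> /eqP ->.
Qed.

Lemma component_star_rel c : c \in S -> component star_rel c = c |: neighbours e c.
Proof.
move=> cS; apply/setP => y; rewrite in_component in_setU1 in_neighbours.
apply/idP/idP => [|/orP[/eqP -> | ecy]]; last 2 first.
- exact: connect0.
- by apply: connect1; rewrite /star_rel /= ecy cS (S_neighbour_notin cS ecy).
apply: (connect_preserved (P := fun y => (y == c) || e c y)) => [a b|];
  last by rewrite eqxx.
case/orP => [/eqP -> | eca] /andP[eab]; first by rewrite eab orbT.
have aS := S_neighbour_notin cS eca.
rewrite (negbTE aS) /= negbK => bS.
by rewrite (S_neighbour_unique aS bS cS eab) ?eqxx // sym_e.
Qed.

Lemma star_rel_K13_centre c : c \in S -> is_K13_component star_rel c.
Proof.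
move=> cS; rewrite /is_K13_component component_star_rel //; split.
  by rewrite cardsU1 in_neighbours irr_e cub_e.
exists c; first by rewrite setU11.
have leaf y : e c y -> (y \in S) = false /\ (y == c) = false.
  move=> ecy; rewrite (negbTE (S_neighbour_notin cS ecy)); split=> //.
  by apply: contraTF ecy => /eqP ->; rewrite irr_e.
move=> x y; rewrite !in_setU1 !in_neighbours /star_rel /=.
case/orP=> [/eqP-> | /[dup] ecx /leaf[-> ->]] /orP[/eqP-> | /[dup] ecy /leaf[-> ->]].
- by rewrite irr_e !eqxx.
- by rewrite ecy cS eqxx.
- by rewrite sym_e ecx cS eqxx.
- by rewrite andbF.
Qed.

Lemma star_rel_K13 v : is_K13_component star_rel v.
Proof.
have [vS | vS] := boolP (v \in S); first exact: star_rel_K13_centre.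
have /cards1P[c cE] : #|neighbours e v :&: S| == 1 by rewrite Sdom.2.
have : c \in neighbours e v :&: S by rewrite cE set11.
rewrite in_setI in_neighbours => /andP[evc cS].
have vc : connect star_rel v c by apply: connect1; rewrite /star_rel /= evc cS (negbTE vS).
rewrite /is_K13_component (component_eq star_rel_sym vc).
exact: star_rel_K13_centre.
Qed.

End StarsAroundS.

Lemma perfect_star_packingP (T : finType) (e : rel T) :
  simple_graph e -> cubic e ->
  perfect_star_packing e <-> exists S, efficient_dominating e S.
Proof.
case=> sym_e irr_e cub_e; split=> [[H [He Hsym HK13]] | [S Sdom]].
  exists (star_centres H); split.
  - exact: star_centres_independent.
  - exact: star_centres_dominating.
exists (star_rel e S); split.
- by move=> x y /andP[].
- exact: star_rel_sym.
- exact: star_rel_K13.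
Qed.

Lemma cubic_dominating_degree (T : finType) (e : rel T) (S : {set T}) x :
  cubic e -> (#|neighbours e x :&: S| == 1) = (#|neighbours e x :\: S| == 2).
Proof.
move=> cub_e; have := cardsID S (neighbours e x).
rewrite cub_e => /(canRL (addKn _)) ->.
by case: #|_ :&: _| => [|[|[|[|n]]]].
Qed.

Theorem mainTheorem3 (V : finType) (e : rel V) :
  fullerene e ->
  (perfect_star_packing e <->
   exists S : {set V}, independent e S /\ components_induced_cycles e S).
Proof.
case=> simple_e _ cub_e _; have [sym_e irr_e] := simple_e.
have cyclesP S := components_induced_cyclesP S sym_e irr_e.
split=> [/(perfect_star_packingP simple_e cub_e)[S [Sind Sdom]] | [S [Sind cycles]]].
  exists S; split=> //; apply/cyclesP => x xS.
  by apply/eqP; rewrite -cubic_dominating_degree // Sdom.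
apply/(perfect_star_packingP simple_e cub_e); exists S; split=> // x xS.
by apply/eqP; rewrite cubic_dominating_degree // (cyclesP S).1.
Qed.
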